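(* Let $a,b\in\mathbb{C}$ with $(a,b)\neq(1,0)$ and $\alpha,\beta,\eta\in\mathbb{C}$ with $\alpha\neq0$. A nontrivial extension $0\to M_{\alpha,\beta}\to E\to\mathbb{C}c_\eta\to0$ of $\mathcal{W}(a,b)$-modules exists if and only if $\beta+\eta=0$ and $\alpha=1$. In this case $\dim\mathrm{Ext}(\mathbb{C}c_{-\beta},M_{1,\beta})=1$, and every nontrivial extension is equivalent to $E=\mathbb{C}[\partial]v\oplus\mathbb{C}c_\eta$ with $$L_\lambda c_\eta=kv,\qquad W_\lambda c_\eta=0,\qquad \partial c_\eta=\eta c_\eta+kv$$ for some nonzero $k\in\mathbb{C}$.
   Context: A conformal module over a Lie conformal algebra $\mathcal{R}$ is a $\mathbb{C}[\partial]$-module $V$ with $\mathbb{C}$-linear maps $\mathcal{R}\otimes V\to V[\lambda]$, $a\otimes v\mapsto a_\lambda v$, such that $(\partial a)_\lambda v=-\lambda a_\lambda v$, $a_\lambda(\partial v)=(\partial+\lambda)a_\lambda v$, and $a_\lambda(b_\mu v)-b_\mu(a_\lambda v)=[a_\lambda b]_{\lambda+\mu}v$. The Lie conformal algebra $\mathcal{W}(a,b)$ is the free $\mathbb{C}[\partial]$-module on $L,W$ with $[L_\lambda L]=(\partial+2\lambda)L$, $[L_\lambda W]=(\partial+a\lambda+b)W$, $[W_\lambda W]=0$. For $(a,b)\neq(1,0)$, $\alpha\neq0$, $M_{\alpha,\beta}=\mathbb{C}[\partial]v$ with $L_\lambda v=(\partial+\alpha\lambda+\beta)v$, $W_\lambda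 v=0$. $\mathbb{C}c_\eta$ is the one-dimensional module with $\partial c_\eta=\eta c_\eta$ and all $\lambda$-actions zero. An extension is an exact sequence of modules $0\to V\to E\to W\to 0$; equivalence means a module homomorphism between the middle terms compatible with the identities on $V$ and $W$; trivial means equivalent to the direct sum extension. $\mathrm{Ext}(W,V)$ denotes the vector space of equivalence classes of extensions of $W$ by $V$ (cocycles modulo coboundaries). *)

From HB Require Import structures.
From mathcomp Require Import all_boot all_order all_algebra.
Set Implicit Arguments. Unset Strict Implicit. Unset Printing Implicit Defensive.
Import Order.TTheory GRing.Theory Num.Theory.
Local Open Scope ring_scope.

(* Conformal modules over the Lie conformal algebra W(a,b) (free C[d]-module
   on L, W).  A module structure on an F-vector space V is given by the
   operator d (= partial) and the lambda-actions of the generators L and W,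
   l |-> L_l v, l |-> W_l v, which must be polynomial in l (elements of V[l]).
   Polynomial identities in lambda, mu are imposed pointwise (F is infinite). *)

Record wdata (F : fieldType) (V : lmodType F) := WData {
  wd : V -> V;
  wL : F -> V -> V;
  wW : F -> V -> V }.

Definition is_lin (F : fieldType) (V U : lmodType F) (f : V -> U) : Prop :=
  forall (k : F) (u v : V), f (k *: u + v) = k *: f u + f v.

(* f : F -> V is (the evaluation map of) an element of V[lambda] *)
Definition is_polyfun (F : fieldType) (V : lmodType F) (f : F -> V) : Prop :=
  exists s : seq V, forall l : F, f l = \sum_(i < size s) (l ^+ i) *: s`_i.

(* Module axioms.  For the generators:
   [L_l L] = (d + 2l) L,  [L_l W] = (d + a l + b) W,  [W_l W] = 0,
   and, with (d x)_l = - l x_l, the Jacobi-type axiom evaluated at l+mu. *)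
Definition is_wmod (F : fieldType) (a b : F) (V : lmodType F) (m : wdata V) : Prop :=
  is_lin (wd m) /\
  (forall l, is_lin (wL m l)) /\ (forall l, is_lin (wW m l)) /\
  (forall v, is_polyfun (fun l => wL m l v)) /\
  (forall v, is_polyfun (fun l => wW m l v)) /\
  (forall l v, wL m l (wd m v) = wd m (wL m l v) + l *: wL m l v) /\
  (forall l v, wW m l (wd m v) = wd m (wW m l v) + l *: wW m l v) /\
  (forall l mu v, wL m l (wL m mu v) - wL m mu (wL m l v)
                  = (l - mu) *: wL m (l + mu) v) /\
  (forall l mu v, wL m l (wW m mu v) - wW m mu (wL m l v)
                  = (a * l + b - (l + mu)) *: wW m (l + mu) v) /\
  (forall l mu v, wW m l (wL m mu v) - wL m mu (wW m l v)
                  = ((l + mu) - a * mu - b) *: wW m (l + mu) v) /\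
  (forall l mu v, wW m l (wW m mu v) - wW m mu (wW m l v) = 0).

Definition is_hom (F : fieldType) (V U : lmodType F) (mV : wdata V) (mU : wdata U)
  (f : V -> U) : Prop :=
  is_lin f /\
  (forall v, f (wd mV v) = wd mU (f v)) /\
  (forall l v, f (wL mV l v) = wL mU l (f v)) /\
  (forall l v, f (wW mV l v) = wW mU l (f v)).

Definition is_ext (F : fieldType) (a b : F) (V W : lmodType F)
  (mV : wdata V) (mW : wdata W) (E : lmodType F) (mE : wdata E)
  (i : V -> E) (p : E -> W) : Prop :=
  is_wmod a b mE /\ is_hom mV mE i /\ is_hom mE mW p /\
  injective i /\ (forall w, exists e, p e = w) /\
  (forall e, p e = 0 <-> exists v, e = i v).

Record ext (F : fieldType) (a b : F) (V W : lmodType F)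
  (mV : wdata V) (mW : wdata W) := Ext {
  ext_E : lmodType F;
  ext_m : wdata ext_E;
  ext_i : V -> ext_E;
  ext_p : ext_E -> W;
  ext_ok : is_ext a b mV mW ext_m ext_i ext_p }.
Arguments ext_E {F a b V W mV mW} _.
Arguments ext_m {F a b V W mV mW} _.
Arguments ext_i {F a b V W mV mW} _.
Arguments ext_p {F a b V W mV mW} _.

Definition ext_equiv_to (F : fieldType) (a b : F) (V W : lmodType F)
  (mV : wdata V) (mW : wdata W) (X : ext a b mV mW)
  (E' : lmodType F) (mE' : wdata E') (i' : V -> E') (p' : E' -> W) : Prop :=
  exists phi : ext_E X -> E',
    is_hom (ext_m X) mE' phi /\
    (forall v, phi (ext_i X v) = i' v) /\
    (forall e, p' (phi e) = ext_p X e).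

Definition dsum (F : fieldType) (V W : lmodType F) (mV : wdata V) (mW : wdata W)
  : wdata (V * W)%type :=
  WData (fun x => (wd mV x.1, wd mW x.2))
        (fun l x => (wL mV l x.1, wL mW l x.2))
        (fun l x => (wW mV l x.1, wW mW l x.2)).

Definition ext_trivial (F : fieldType) (a b : F) (V W : lmodType F)
  (mV : wdata V) (mW : wdata W) (X : ext a b mV mW) : Prop :=
  ext_equiv_to X (dsum mV mW) (fun v => (v, 0)) (fun x => x.2).

(* Ext(W,V) as cocycles modulo coboundaries. *)
Definition twist (F : fieldType) (V W : lmodType F) (mV : wdata V) (mW : wdata W)
  (cd : W -> V) (cL cW : F -> W -> V) : wdata (V * W)%type :=
  WData (fun x => (wd mV x.1 + cd x.2, wd mW x.2))
        (fun l x => (wL mV l x.1 + cL l x.2, wL mW l x.2))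
        (fun l x => (wW mV l x.1 + cW l x.2, wW mW l x.2)).

Definition is_cocycle (F : fieldType) (a b : F) (V W : lmodType F)
  (mV : wdata V) (mW : wdata W) (cd : W -> V) (cL cW : F -> W -> V) : Prop :=
  is_wmod a b (twist mV mW cd cL cW).

Definition is_coboundary (F : fieldType) (V W : lmodType F)
  (mV : wdata V) (mW : wdata W) (cd : W -> V) (cL cW : F -> W -> V) : Prop :=
  exists phi : W -> V, is_lin phi /\
    (forall w, cd w = wd mV (phi w) - phi (wd mW w)) /\
    (forall l w, cL l w = wL mV l (phi w) - phi (wL mW l w)) /\
    (forall l w, cW l w = wW mV l (phi w) - phi (wW mW l w)).

(* dim Ext(W,V) = 1 : the quotient (cocycles)/(coboundaries) is one-dimensional *)
Definition Ext_dim1 (F : fieldType) (a b : F) (V W : lmodType F)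
  (mV : wdata V) (mW : wdata W) : Prop :=
  exists cd0 cL0 cW0,
    is_cocycle a b mV mW cd0 cL0 cW0 /\ ~ is_coboundary mV mW cd0 cL0 cW0 /\
    forall cd cL cW, is_cocycle a b mV mW cd cL cW ->
      exists k : F, is_coboundary mV mW (fun w => cd w - k *: cd0 w)
                     (fun l w => cL l w - k *: cL0 l w)
                     (fun l w => cW l w - k *: cW0 l w).

(* M_{alpha,beta} = F[d] v, realised on {poly F} (p(d) v <-> p):
   d acts by 'X, L_l (p(d) v) = p(d + l) (d + alpha l + beta) v, W_l = 0. *)
Definition Mmod (F : fieldType) (alpha beta : F) : wdata {poly F} :=
  WData (fun p => 'X * p)
        (fun l p => (p \Po ('X + l%:P)) * ('X + (alpha * l + beta)%:P))
        (fun _ _ => 0).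

(* C c_eta, realised on F (x <-> x c_eta): d acts by eta, all lambda-actions 0 *)
Definition Cmod (F : fieldType) (eta : F) : wdata F^o :=
  WData (fun x : F^o => (eta * x : F) : F^o) (fun _ _ => 0) (fun _ _ => 0).

(* The extension E_k = F[d] v (+) F c_eta with
   L_l c_eta = k v, W_l c_eta = 0, d c_eta = eta c_eta + k v,
   realised on {poly F} * F, with v <-> (1,0), c_eta <-> (0,1). *)
Definition Ekmod (F : fieldType) (alpha beta eta k : F) : wdata ({poly F} * F^o)%type :=
  WData (fun x : ({poly F} * F^o)%type => ('X * x.1 + (k * (x.2 : F))%:P, (eta * x.2 : F) : F^o))
        (fun l (x : ({poly F} * F^o)%type) => (wL (Mmod alpha beta) l x.1 + (k * (x.2 : F))%:P, 0))
        (fun _ _ => 0).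

Definition Ek_i (F : fieldType) (p : {poly F}) : ({poly F} * F^o)%type := (p, 0).
Definition Ek_p (F : fieldType) (x : ({poly F} * F^o)%type) : F^o := x.2.

From HB Require Import structures.
From mathcomp Require Import all_boot all_order all_algebra.
From mathcomp Require Import ring.
From Stdlib Require Import FunctionalExtensionality.
Import Order.TTheory GRing.Theory Num.Theory.
Local Open Scope ring_scope.
Set Implicit Arguments. Unset Strict Implicit.

(* In an extension 0 -> M -i-> E -p-> C c_eta -> 0 choose c
   with p c = 1; subtracting an element of i(M) (factor theorem at eta) we
   get d c = eta c + k v for a constant k.  Then W_l (d c) = (d + l) W_l c
   forces W_l c = 0, and L_l (d c) = (d + l) L_l c forces L_l c = g_l(d) v
   with (d + l - eta) g_l = k (d + alpha l + beta).  Either k = 0, or k <> 0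
   and then beta + eta = 0, alpha = 1; in both cases g_l = k and E is
   equivalent to the model E_k (Ekmod), E_0 being the split extension.  E_k is M (+) C c_eta twisted by k times the basic cocycle
   c_eta |-> v; an equivalence between twists exhibits the difference of the
   cocycles as a coboundary, and the basic cocycle is not a coboundary since
   (d - eta) q = 1 has no solution.  The
   hypotheses (a,b) <> (1,0) and alpha <> 0 turn out not to be needed. *)

Section LinearMaps.
Variables (F : fieldType) (V U : lmodType F) (f : V -> U).
Hypothesis f_lin : is_lin f.

Lemma lin0 : f 0 = 0.
Proof.
have e := f_lin 1 0 0; rewrite !scale1r !addr0 in e.
by apply: (addrI (f 0)); rewrite addr0 -e.
Qed.

Lemma linD u v : f (u + v) = f u + f v.
Proof. by have := f_lin 1 u v; rewrite !scale1r. Qed.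

Lemma linZ k u : f (k *: u) = k *: f u.
Proof. by have := f_lin k u 0; rewrite !addr0 lin0 addr0. Qed.

Lemma linB u v : f (u - v) = f u - f v.
Proof. by rewrite linD -scaleN1r linZ scaleN1r. Qed.

End LinearMaps.

Section Pairs.
Variables (F : fieldType) (V W : lmodType F).
Implicit Types (u v : V) (x y : W).

Lemma pairZ s u x : s *: ((u, x) : V * W) = (s *: u, s *: x). Proof. by []. Qed.
Lemma pairD u v x y : ((u, x) : V * W) + (v, y) = (u + v, x + y). Proof. by []. Qed.
Lemma pairN u x : - ((u, x) : V * W) = (- u, - x). Proof. by []. Qed.
Lemma pair0 : (0 : V * W) = (0, 0). Proof. by []. Qed.

End Pairs.

Lemma scaleO (F : fieldType) (s : F) (x : F^o) : s *: x = (s * x : F).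
Proof. by []. Qed.

Section PolynomialFunctions.
Variables (F : fieldType).

Lemma polyfun_of_coefs (V : lmodType F) (f : F -> V) n (c : nat -> V) :
  (forall l, f l = \sum_(i < n) l ^+ i *: c i) -> is_polyfun f.
Proof.
move=> H; exists (mkseq c n) => l; rewrite size_mkseq H.
by apply: eq_bigr => i _; rewrite nth_mkseq.
Qed.

Lemma polyfun_coefs (V : lmodType F) (f : F -> V) : is_polyfun f ->
  exists n (c : nat -> V), forall l, f l = \sum_(i < n) l ^+ i *: c i.
Proof. by case=> s H; exists (size s), (fun i => s`_i). Qed.

Lemma polyfun_ext (V : lmodType F) (f g : F -> V) : f =1 g -> is_polyfun f -> is_polyfun g.
Proof. by move=> e [s H]; exists s => l; rewrite -e H. Qed.

Lemma polyfun_const (V : lmodType F) (v : V) : is_polyfun (fun=> v).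
Proof.
by apply: (@polyfun_of_coefs _ _ 1 (fun=> v)) => l; rewrite big_ord1 expr0 scale1r.
Qed.

Lemma polyfunD (V : lmodType F) (f g : F -> V) :
  is_polyfun f -> is_polyfun g -> is_polyfun (fun l => f l + g l).
Proof.
move=> /polyfun_coefs [n [c Hc]] /polyfun_coefs [m [d Hd]].
(* pad both coefficient sequences to the common length maxn n m *)
have widen k (e : nat -> V) : (k <= maxn n m)%N -> forall l,
    \sum_(i < k) l ^+ i *: e i
    = \sum_(i < maxn n m) l ^+ i *: (if (i < k)%N then e i else 0).
  move=> le_k l; rewrite (big_ord_widen _ (fun i => l ^+ i *: e i) le_k) big_mkcond.
  by apply: eq_bigr => i _; case: ifP; rewrite ?scaler0.
apply: (@polyfun_of_coefs _ _ (maxn n m)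
  (fun i => (if (i < n)%N then c i else 0) + (if (i < m)%N then d i else 0))) => l.
rewrite Hc Hd (widen _ _ (leq_maxl n m)) (widen _ _ (leq_maxr n m)) -big_split.
by apply: eq_bigr => i _; rewrite scalerDr.
Qed.

Lemma polyfun_scale_var (V : lmodType F) (f : F -> V) :
  is_polyfun f -> is_polyfun (fun l => l *: f l).
Proof.
move=> /polyfun_coefs [n [c Hc]].
apply: (@polyfun_of_coefs _ _ n.+1 (fun i => if i is j.+1 then c j else 0)) => l.
rewrite big_ord_recl scaler0 add0r Hc scaler_sumr.
by apply: eq_bigr => i _; rewrite scalerA exprS.
Qed.

Lemma polyfun_lin (V U : lmodType F) (phi : V -> U) (f : F -> V) :
  is_lin phi -> is_polyfun f -> is_polyfun (fun l => phi (f l)).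
Proof.
move=> lphi /polyfun_coefs [n [c Hc]].
apply: (@polyfun_of_coefs _ _ n (fun i => phi (c i))) => l.
rewrite Hc (big_morph phi (linD lphi) (lin0 lphi)).
by apply: eq_bigr => i _; rewrite (linZ lphi).
Qed.

End PolynomialFunctions.

Section ShiftPolynomial.
Variable F : fieldType.

Lemma mulr_lin (q : {poly F}) : is_lin (fun u : {poly F} => u * q).
Proof. by move=> k u v; rewrite mulrDl scalerAl. Qed.

Lemma polyfun_shift (p : {poly F}) : is_polyfun (fun l => p \Po ('X + l%:P)).
Proof.
elim/poly_ind: p => [|p c IH].
  by apply: (polyfun_ext _ (polyfun_const 0)) => l; rewrite comp_poly0.
have e l : ((p \Po ('X + l%:P)) * 'X + l *: (p \Po ('X + l%:P))) + c%:P
    = (p * 'X + c%:P) \Po ('X + l%:P).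
  by rewrite comp_polyD comp_polyM comp_polyX comp_polyC -mul_polyC; ring.
apply: (polyfun_ext e); apply: polyfunD (polyfun_const _).
exact: polyfunD (polyfun_lin (mulr_lin _) IH) (polyfun_scale_var IH).
Qed.

Lemma polyfun_Mmod (alpha beta : F) (p : {poly F}) :
  is_polyfun (fun l => wL (Mmod alpha beta) l p).
Proof.
have e l : (p \Po ('X + l%:P)) * ('X + beta%:P) + l *: (alpha *: (p \Po ('X + l%:P)))
    = wL (Mmod alpha beta) l p.
  by rewrite /= -!mul_polyC polyCD polyCM; ring.
apply: (polyfun_ext e); apply: polyfunD (polyfun_lin (mulr_lin _) (polyfun_shift p)) _.
apply: polyfun_scale_var; apply: polyfun_lin (polyfun_shift p).
by move=> k u v; rewrite scalerDr !scalerA mulrC.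
Qed.

End ShiftPolynomial.

Section ModelModule.
Variable F : fieldType.

Lemma comp_shift (p : {poly F}) (c d : F) :
  (p \Po ('X + c%:P)) \Po ('X + d%:P) = p \Po ('X + (c + d)%:P).
Proof.
rewrite -comp_polyA comp_polyD comp_polyX comp_polyC polyCD.
by congr (_ \Po _); ring.
Qed.

Ltac split_pair := rewrite ?pairN ?pairZ ?pairD ?pair0 ?scaleO /=; congr (_, _).
(* turn scalings into multiplications by constants, ready for [ring] *)
Ltac expand_polyC := rewrite -?mul_polyC ?(polyCD, polyCM, polyCN, polyCB,
  comp_polyD, comp_polyM, comp_polyZ, comp_polyX, comp_polyC, comp_poly0).

Lemma Ekmod_wmod (a b beta k : F) : is_wmod a b (Ekmod 1 beta (- beta) k).
Proof.
rewrite /is_wmod /=.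
do !split.
- move=> s [p y] [q z] /=; split_pair; first by expand_polyC; ring.
  by rewrite ?scaleO; ring.
- move=> l s [p y] [q z] /=; split_pair; last by rewrite mulr0 addr0.
  by expand_polyC; ring.
- by move=> l s [p y] [q z] /=; rewrite scaler0 addr0.
- move=> [p y].
  have e l : ((wL (Mmod 1 beta) l p, 0) : {poly F} * F^o) + ((k * y)%:P, 0)
      = (wL (Mmod 1 beta) l p + (k * y)%:P, 0).
    by rewrite pairD addr0.
  apply: (polyfun_ext e); apply: polyfunD (polyfun_const _).
  apply: (@polyfun_lin _ _ _ (fun u : {poly F} => ((u, 0) : {poly F} * F^o)))
    (polyfun_Mmod _ _ _).
  by move=> s u v; rewrite pairZ pairD scaler0 addr0.
- by move=> _; apply: polyfun_const.
- move=> l [p y] /=; split_pair; last by rewrite !mulr0 addr0.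
  by rewrite comp_polyD comp_polyM; set P := p \Po _; expand_polyC; ring.
- by move=> l _; split_pair; rewrite ?mulr0 ?scaler0 ?addr0.
- move=> l mu [p y] /=.
  rewrite !comp_polyD !comp_polyM !comp_shift [mu + l]addrC; set P := p \Po _.
  split_pair; last by rewrite ?scaleO; ring.
  by expand_polyC; ring.
- by move=> l mu _; split_pair;
    rewrite ?comp_poly0 ?mul0r ?mulr0 ?scaler0 ?add0r ?subr0 ?oppr0.
- by move=> l mu _; split_pair;
    rewrite ?comp_poly0 ?mul0r ?mulr0 ?scaler0 ?add0r ?subr0 ?oppr0.
- by move=> l mu _; rewrite subr0.
Qed.

End ModelModule.

Lemma Ekmod_ext (F : fieldType) (a b alpha beta eta k : F) :
  alpha = 1 -> beta + eta = 0 ->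
  is_ext a b (Mmod alpha beta) (Cmod eta) (Ekmod alpha beta eta k) (@Ek_i F) (@Ek_p F).
Proof.
move=> -> /eqP; rewrite addrC addr_eq0 => /eqP ->.
split; first exact: Ekmod_wmod.
have i_hom : is_hom (Mmod 1 beta) (Ekmod 1 beta (- beta) k) (@Ek_i F).
  split; [move=> s u v | split; [move=> v | split; [move=> l v | by []]]];
    by rewrite /Ek_i /= ?pairZ ?pairD ?scaler0 ?mulr0 ?addr0.
split=> //.
split; first by split=> //= s [u x] [v y].
split; first by move=> u v [].
split; first by move=> w; exists (0, w).
by move=> [u x]; rewrite /Ek_p /=; split=> [->|[v [_ ->]]]; first exists u.
Qed.

Definition zero_preserving (F : fieldType) (V : lmodType F) (m : wdata V) : Prop :=
  wd m 0 = 0 /\ (forall l, wL m l 0 = 0) /\ (forall l, wW m l 0 = 0).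

Section Twists.
Variables (F : fieldType) (a b : F) (V W : lmodType F) (mV : wdata V) (mW : wdata W).
Hypothesis mV_zero : zero_preserving mV.

Lemma twist_ext (cd : W -> V) (cL cW : F -> W -> V) :
  is_cocycle a b mV mW cd cL cW ->
  is_ext a b mV mW (twist mV mW cd cL cW) (fun v => (v, 0)) (fun x => x.2).
Proof.
case: mV_zero => d0 [L0 W0] hc; have [ld [lL [lW _]]] := hc.
(* the twisted maps are linear, so they vanish at 0: cd 0 = 0, wd mW 0 = 0, ... *)
have := lin0 ld; rewrite [in LHS]pair0 /= d0 add0r => -[cd0 dW0].
have zL l : cL l 0 = 0 /\ wL mW l 0 = 0.
  by have := lin0 (lL l); rewrite [in LHS]pair0 /= L0 add0r => -[].
have zW l : cW l 0 = 0 /\ wW mW l 0 = 0.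
  by have := lin0 (lW l); rewrite [in LHS]pair0 /= W0 add0r => -[].
split=> //; split.
  split; first by move=> s u v; rewrite pairZ pairD scaler0 addr0.
  split; first by move=> v /=; rewrite cd0 dW0 addr0.
  by split=> l v /=; [case: (zL l) | case: (zW l)] => -> ->; rewrite addr0.
split; first by split.
split; first by move=> u v [].
split; first by move=> w; exists (0, w).
by move=> [u x] /=; split=> [->|[v [_ ->]]]; first exists u.
Qed.

Lemma twist_equiv_coboundary (cd cd' : W -> V) (cL cL' cW cW' : F -> W -> V)
    (phi : V * W -> V * W) :
  is_hom (twist mV mW cd cL cW) (twist mV mW cd' cL' cW') phi ->
  (forall v, phi (v, 0) = (v, 0)) -> (forall x, (phi x).2 = x.2) ->
  is_coboundary mV mW (fun w => cd w - cd' w) (fun l w => cL l w - cL' l w)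
    (fun l w => cW l w - cW' l w).
Proof.
case: mV_zero => d0 [L0 W0] [lphi [hd [hL hW]]] hi hp.
pose psi w := (phi (0, w)).1.
have phiE v w : phi (v, w) = (v + psi w, w).
  have -> : phi (v, w) = (v, 0) + phi (0, w).
    by rewrite -hi -(linD lphi) pairD addr0 add0r.
  rewrite /psi; case E: (phi (0, w)) => [q w'] /=.
  by have := hp (0, w); rewrite E /= => ->; rewrite pairD add0r.
have diff (c c' dpsi psid : V) : c + psid = dpsi + c' -> c - c' = dpsi - psid.
  by move=> e; rewrite -[c](addrK psid) e addrAC addrK.
exists psi; split.
  move=> k u v; rewrite /psi.
  rewrite (_ : (0, k *: u + v) = k *: ((0, u) : V * W) + (0, v)).
    by rewrite (linD lphi) (linZ lphi) !phiE.
  by rewrite pairZ pairD scaler0 add0r.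
split.
  move=> w; apply: diff.
  by have := hd (0, w); rewrite /= d0 add0r !phiE add0r => -[].
split.
  move=> l w; apply: diff.
  by have := hL l (0, w); rewrite /= L0 add0r !phiE add0r => -[].
move=> l w; apply: diff.
by have := hW l (0, w); rewrite /= W0 add0r !phiE add0r => -[].
Qed.

End Twists.

Definition basic_cocycle (F : fieldType) (k : F) (w : F^o) : {poly F} := (k * w)%:P.

Section ModelTwists.
Variables (F : fieldType) (alpha beta eta : F).

Lemma Mmod_zero_preserving : zero_preserving (Mmod alpha beta).
Proof. by split; [|split] => [|l|l] /=; rewrite ?mulr0 ?comp_poly0 ?mul0r. Qed.

Lemma Ekmod_twist (k : F) :
  Ekmod alpha beta eta k = twist (Mmod alpha beta) (Cmod eta)
    (basic_cocycle k) (fun=> basic_cocycle k) (fun _ _ => 0).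
Proof.
rewrite /twist /Ekmod; congr WData.
by apply: functional_extensionality => l; apply: functional_extensionality => x;
  rewrite /= addr0.
Qed.

Lemma Ekmod0_dsum : Ekmod alpha beta eta 0 = dsum (Mmod alpha beta) (Cmod eta).
Proof.
rewrite /Ekmod /dsum; congr WData.
  by apply: functional_extensionality => x; rewrite mul0r addr0.
by apply: functional_extensionality => l; apply: functional_extensionality => x;
  rewrite mul0r addr0.
Qed.

(* A cocycle whose d-part is c_eta |-> k v with k <> 0 is not a coboundary:
   that would need a polynomial q with (X - eta) q = k. *)
Lemma basic_not_coboundary (cd : F^o -> {poly F}) (cL cW : F -> F^o -> {poly F}) (k : F) :
  k != 0 -> cd 1 = k%:P -> ~ is_coboundary (Mmod alpha beta) (Cmod eta) cd cL cW.
Proof.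
move=> k0 cd1 [psi [lpsi [hd _]]].
have := hd 1; rewrite cd1 /= (_ : psi (eta * 1) = eta *: psi 1).
  by move/(congr1 (horner^~ eta)); rewrite !hornerE subrr => /eqP; rewrite (negbTE k0).
exact: linZ lpsi eta 1.
Qed.

End ModelTwists.

Lemma Xadd_neq0 (F : fieldType) (c : F) : 'X + c%:P != 0.
Proof. by rewrite -size_poly_eq0 size_XaddC. Qed.

(* The relation (X + l - eta) g = k (X + alpha l + beta), solvable for all l
   with k <> 0, forces the two linear factors to agree: beta + eta = 0 and
   alpha = 1 (evaluate at X = eta - l for l = 0, 1). *)
Lemma affine_relation_conditions (F : fieldType) (alpha beta eta k : F) : k != 0 ->
  (forall l, exists g : {poly F},
     ('X + (l - eta)%:P) * g = k *: ('X + (alpha * l + beta)%:P)) ->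
  beta + eta = 0 /\ alpha = 1.
Proof.
move=> k0 hg.
have root_eta l : eta - l + (alpha * l + beta) = 0.
  have [g /(congr1 (horner^~ (eta - l)))] := hg l.
  rewrite -mul_polyC !(hornerM, hornerD, hornerX, hornerC).
  rewrite (_ : eta - l + (l - eta) = 0) ?mul0r; last by ring.
  by move=> /esym /eqP; rewrite mulf_eq0 (negbTE k0) => /eqP.
have be : beta + eta = 0 by have := root_eta 0; rewrite subr0 mulr0 add0r addrC.
split=> //; apply/eqP; rewrite -subr_eq0; apply/eqP.
have -> : alpha - 1 = eta - 1 + (alpha * 1 + beta) - (beta + eta) by ring.
by rewrite root_eta be subr0.
Qed.

Lemma affine_relation_const (F : fieldType) (alpha beta eta k l : F) (g : {poly F}) :
  (k != 0 -> beta + eta = 0 /\ alpha = 1) ->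
  ('X + (l - eta)%:P) * g = k *: ('X + (alpha * l + beta)%:P) -> g = k%:P.
Proof.
move=> cond e; have [k0|/cond [be a1]] := eqVneq k 0.
  move: e; rewrite k0 scale0r polyC0 => /eqP.
  by rewrite mulf_eq0 (negbTE (Xadd_neq0 _)) => /eqP.
apply: (mulfI (Xadd_neq0 (l - eta))); rewrite e a1 mul1r -mul_polyC [RHS]mulrC.
suff -> : beta = - eta by [].
by apply/eqP; rewrite -addr_eq0 be.
Qed.

Section ExtensionNormalForm.
Variables (F : fieldType) (a b alpha beta eta : F) (E : lmodType F) (m : wdata E)
  (i : {poly F} -> E) (p : E -> F^o).
Hypothesis H : is_ext a b (Mmod alpha beta) (Cmod eta) m i p.

Let m_mod : is_wmod a b m. Proof. by case: H. Qed.
Let i_hom : is_hom (Mmod alpha beta) m i. Proof. by case: H => _ []. Qed.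
Let p_hom : is_hom m (Cmod eta) p. Proof. by case: H => _ [] _ []. Qed.
Let i_inj : injective i. Proof. by case: H => _ [] _ [] _ []. Qed.
Let p_onto : forall w, exists e, p e = w. Proof. by case: H => _ [] _ [] _ [] _ []. Qed.
Let exact_ip : forall e, p e = 0 <-> exists v, e = i v.
Proof. by case: H => _ [] _ [] _ [] _ []. Qed.

Lemma p_i v : p (i v) = 0. Proof. by apply/exact_ip; exists v. Qed.

Lemma normalized_lift : exists (c : E) (k : F), p c = 1 /\ wd m c = eta *: c + i k%:P.
Proof.
case: i_hom => li [hid _]; case: p_hom => lp [pd _]; have [lm _] := m_mod.
have [c0 pc0] := p_onto 1.
have : p (wd m c0 - eta *: c0) = 0 by rewrite (linB lp) (linZ lp) pd pc0 /= scaleO subrr.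
move=> /exact_ip [f hf].
set k := f.[eta].
have /factor_theorem [q hq] : root (f - k%:P) eta by rewrite /root !hornerE subrr.
exists (c0 - i q), k; split; first by rewrite (linB lp) p_i pc0 subr0.
have dc0 : wd m c0 = eta *: c0 + i f by rewrite -hf addrC subrK.
rewrite (linB lm) dc0 -hid scalerBr -(linZ li) -!addrA; congr (_ + _).
rewrite [RHS]addrC -!(linB li); congr (i _).
by rewrite /= -[f](subrK k%:P) hq -!mul_polyC; ring.
Qed.

Section NormalizedLift.
Variables (c : E) (k : F).
Hypotheses (pc : p c = 1) (dc : wd m c = eta *: c + i k%:P).

(* W kills a normalized lift: W_l c = i h with (X + l - eta) h = 0. *)
Lemma lift_W l : wW m l c = 0.
Proof.
case: i_hom => li [hid [_ hiW]]; case: p_hom => _ [_ [_ pW]].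
have [_ [_ [lW [_ [_ [_ [dW _]]]]]]] := m_mod.
have [h hh] : exists h, wW m l c = i h by apply/exact_ip; rewrite pW.
have := dW l c; rewrite dc (linD (lW l)) (linZ (lW l)) hh -hiW /= (lin0 li) addr0.
rewrite -hid -!(linZ li) -(linD li) => /i_inj /= e.
have : ('X + (l - eta)%:P) * h = 0.
  have -> : ('X + (l - eta)%:P) * h = ('X * h + l *: h) - eta *: h.
    by rewrite -!mul_polyC polyCB; ring.
  by rewrite -e subrr.
by move/eqP; rewrite mulf_eq0 (negbTE (Xadd_neq0 _)) /= => /eqP ->; rewrite (lin0 li).
Qed.

Lemma lift_L l : exists g, wL m l c = i g /\
  ('X + (l - eta)%:P) * g = k *: ('X + (alpha * l + beta)%:P).
Proof.
case: i_hom => li [hid [hiL _]]; case: p_hom => _ [_ [pL _]].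
have [_ [lL [_ [_ [_ [dL _]]]]]] := m_mod.
have [g hg] : exists g, wL m l c = i g by apply/exact_ip; rewrite pL.
exists g; split=> //.
have := dL l c; rewrite dc (linD (lL l)) (linZ (lL l)) hg -hiL -hid.
rewrite -!(linZ li) -!(linD li) => /i_inj /= e.
rewrite comp_polyC in e.
have -> : ('X + (l - eta)%:P) * g = ('X * g + l *: g) - eta *: g.
  by rewrite -!mul_polyC polyCB; ring.
by rewrite -e addrC addKr mul_polyC.
Qed.

Lemma lift_retraction : exists r : E -> {poly F},
  is_lin r /\ forall e, i (r e) = e - (p e : F) *: c.
Proof.
case: i_hom => li _; case: p_hom => lp _.
have in_ker e : p (e - (p e : F) *: c) = 0.
  by rewrite (linB lp) (linZ lp) pc /= scaleO mulr1 subrr.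
have in_img e : exists v, i v == e - (p e : F) *: c.
  by have [v ->] := (exact_ip _).1 (in_ker e); exists v.
exists (fun e => xchoose (in_img e)).
have rE e : i (xchoose (in_img e)) = e - (p e : F) *: c by apply/eqP/(xchooseP (in_img e)).
split=> // s u v; apply: i_inj.
rewrite (linD li) (linZ li) !rE (linD lp) (linZ lp).
by rewrite scalerDl -scalerA scalerBr opprD addrACA.
Qed.

(* If moreover L_l c = k v for all l, then (r, p) identifies E with E_k. *)
Lemma lift_equiv : (forall l, wL m l c = i k%:P) ->
  ext_equiv_to (Ext H) (Ekmod alpha beta eta k) (@Ek_i F) (@Ek_p F).
Proof.
move=> hL; have hW := lift_W.
case: i_hom => li [hid [hiL hiW]]; case: p_hom => lp [pd [pL pW]].
have [lm [lL [lW _]]] := m_mod.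
have [r [lr rE]] := lift_retraction.
have kc (x : F) : i (k * x)%:P = x *: i k%:P.
  by rewrite -(linZ li) -mul_polyC -polyCM mulrC.
exists (fun e => (r e, p e)); split; [split; [|split; [|split]]|split] => //.
- by move=> s u v; rewrite pairZ pairD (lr s u v) (linD lp) (linZ lp).
- move=> e /=; congr (_, _); last by rewrite pd.
  apply: i_inj; rewrite rE pd (linD li) kc hid rE (linB lm) (linZ lm) dc.
  by rewrite scalerDr opprD addrA subrK /= [in RHS]scalerA mulrC.
- move=> l e /=; congr (_, _); last by rewrite pL.
  apply: i_inj; rewrite rE pL (linD li) kc hiL rE (linB (lL l)) (linZ (lL l)) hL.
  by rewrite subrK /= scale0r subr0.
- move=> l e /=; rewrite pair0; congr (_, _); last by rewrite pW.
  apply: i_inj; rewrite rE pW /= scale0r subr0 (lin0 li).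
  rewrite -[e](subrK ((p e : F) *: c)) -rE (linD (lW l)) (linZ (lW l)) hW -hiW /=.
  by rewrite (lin0 li) scaler0 addr0.
- move=> v /=; congr (_, _); last by rewrite p_i.
  by apply: i_inj; rewrite rE p_i scale0r subr0.
Qed.

End NormalizedLift.
End ExtensionNormalForm.

Lemma ext_classification (F : fieldType) (a b alpha beta eta : F)
    (X : ext a b (Mmod alpha beta) (Cmod eta)) :
  exists k : F, (k != 0 -> beta + eta = 0 /\ alpha = 1) /\
    ext_equiv_to X (Ekmod alpha beta eta k) (@Ek_i F) (@Ek_p F).
Proof.
case: X => E m i p hE.
have [c [k [pc dc]]] := normalized_lift hE.
have cond : k != 0 -> beta + eta = 0 /\ alpha = 1.
  move=> k0; apply: (affine_relation_conditions k0) => l.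
  by have [g [_ hg]] := lift_L hE dc l; exists g.
exists k; split=> //; apply: (lift_equiv hE pc dc) => l.
by have [g [-> /(affine_relation_const cond) ->]] := lift_L hE dc l.
Qed.

Lemma ext_trivial_Ekmod0 (F : fieldType) (a b alpha beta eta : F)
    (X : ext a b (Mmod alpha beta) (Cmod eta)) :
  ext_trivial X <-> ext_equiv_to X (Ekmod alpha beta eta 0) (@Ek_i F) (@Ek_p F).
Proof. by rewrite Ekmod0_dsum. Qed.

Lemma Ekmod_nontrivial (F : fieldType) (a b alpha beta eta k : F)
    (hE : is_ext a b (Mmod alpha beta) (Cmod eta) (Ekmod alpha beta eta k)
            (@Ek_i F) (@Ek_p F)) :
  k != 0 -> ~ ext_trivial (Ext hE).
Proof.
move=> k0 /ext_trivial_Ekmod0 [phi [hom [hi hp]]]; rewrite /= !Ekmod_twist in hom.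
have := twist_equiv_coboundary (Mmod_zero_preserving _ _) hom hi hp.
by apply: (basic_not_coboundary k0); rewrite /basic_cocycle mul0r subr0 mulr1.
Qed.

Lemma Ext_dim1_basic (F : fieldType) (a b beta : F) :
  Ext_dim1 a b (Mmod 1 beta) (Cmod (- beta)).
Proof.
exists (basic_cocycle 1), (fun=> basic_cocycle 1), (fun _ _ => 0).
split; first by rewrite /is_cocycle -Ekmod_twist; apply: Ekmod_wmod.
split; first by apply: (basic_not_coboundary (oner_neq0 F)); rewrite /basic_cocycle mulr1.
move=> cd cL cW hc.
have [k [_ [phi [hom [hi hp]]]]] :=
  ext_classification (Ext (twist_ext (Mmod_zero_preserving 1 beta) hc)).
rewrite /= Ekmod_twist in hom.
have [psi [lpsi [hd [hL hW]]]] :=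
  twist_equiv_coboundary (Mmod_zero_preserving _ _) hom hi hp.
have kbasic w : basic_cocycle k w = k *: basic_cocycle 1 w.
  by rewrite /basic_cocycle mul1r polyCM mul_polyC.
exists k, psi; split=> //; split; [|split] => [w|l w|l w].
- by rewrite -kbasic hd.
- by rewrite -kbasic hL.
- by rewrite scaler0 hW.
Qed.

Unset Implicit Arguments.

Theorem theorem3p5 (F : numClosedFieldType) (a b alpha beta eta : F) :
  (a, b) != (1, 0) -> alpha != 0 ->
  ((exists X : ext a b (Mmod alpha beta) (Cmod eta), ~ ext_trivial X)
     <-> (beta + eta = 0 /\ alpha = 1)) /\
  (beta + eta = 0 -> alpha = 1 ->
     Ext_dim1 a b (Mmod 1 beta) (Cmod (- beta)) /\
     (forall X : ext a b (Mmod alpha beta) (Cmod eta), ~ ext_trivial X ->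
        exists k : F, k != 0 /\
          is_ext a b (Mmod alpha beta) (Cmod eta) (Ekmod alpha beta eta k)
                 (@Ek_i F) (@Ek_p F) /\
          ext_equiv_to X (Ekmod alpha beta eta k) (@Ek_i F) (@Ek_p F))).
Proof.
move=> _ _.
have nonsplit (X : ext a b (Mmod alpha beta) (Cmod eta)) : ~ ext_trivial X ->
    exists k : F, k != 0 /\ (beta + eta = 0 /\ alpha = 1) /\
      ext_equiv_to X (Ekmod alpha beta eta k) (@Ek_i F) (@Ek_p F).
  move=> ntX; have [k [cond eqX]] := ext_classification X.
  have k0 : k != 0.
    by apply/eqP => k0; apply: ntX; apply/ext_trivial_Ekmod0; rewrite -k0.
  by exists k; split; [|split; [apply: cond|]].
split.
  split=> [[X /nonsplit [k [_ [conds _]]]] // | [be a1]].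
  exists (Ext (Ekmod_ext a b 1 a1 be)).
  by apply: Ekmod_nontrivial; exact: oner_neq0.
move=> be a1; split; first exact: Ext_dim1_basic.
move=> X /nonsplit [k [k0 [_ eqX]]].
by exists k; split=> //; split=> //; apply: Ekmod_ext.
Qed.
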